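(* Let $X$ be a topological space with a finite cover $\mathcal S$, $\Gamma$ a family of curves in $X$, and $1\le p\le q$. Then for every $\varepsilon>0$, $$\mathrm{mod}_q(\Gamma,\mathcal S)\le\Big(\varepsilon^{q-p}+\frac1{\varepsilon^p}\sup_{s\in\mathcal S}\mathrm{mod}_q(\Gamma(s),\mathcal S)\Big)\mathrm{mod}_p(\Gamma,\mathcal S),$$ where $\Gamma(s)$ denotes the subfamily of curves of $\Gamma$ which meet $s$.
   Context: Combinatorial modulus: for a cover $\mathcal S$ and $p\ge1$, $\mathcal M_p(\mathcal S)$ is the set of functions $\rho:\mathcal S\to[0,\infty)$ with $0<\sum_s\rho(s)^p<\infty$. For $K\subset X$, $\mathcal S(K)$ is the set of elements of $\mathcal S$ meeting $K$ and $\ell_\rho(K)=\sum_{s\in\mathcal S(K)}\rho(s)$; $V_p(\rho)=\sum_{s\in\mathcal S}\rho(s)^p$; $L_\rho(\Gamma,\mathcal S)=\inf_{\gamma\in\Gamma}\ell_\rho(\gamma)$; and $\mathrm{mod}_p(\Gamma,\mathcal S)=\inf_{\rho\in\mathcal M_p(\mathcal S)}V_p(\rho)/L_\rho(\Gamma,\mathcal S)^p$. *)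

From Stdlib Require Import Reals List Classical ClassicalEpsilon.
Import ListNotations.
Open Scope R_scope.

Record TopSpace := {
  carrier :> Type;
  is_open : (carrier -> Prop) -> Prop;
  open_full : is_open (fun _ => True);
  open_empty : is_open (fun _ => False);
  open_inter : forall U V, is_open U -> is_open V -> is_open (fun x => U x /\ V x);
  open_union : forall (F : (carrier -> Prop) -> Prop),
      (forall U, F U -> is_open U) -> is_open (fun x => exists U, F U /\ U x)
}.

Definition unit_interval (t : R) : Prop := 0 <= t <= 1.

(** A curve in X: a map [0,1] -> X (represented as R -> X, only values on
    [0,1] matter) which is continuous for the subspace topology of [0,1]. *)
Definition is_curve (X : TopSpace) (g : R -> X) : Prop :=
  forall U : X -> Prop, is_open X U ->
    forall t, unit_interval t -> U (g t) ->
      exists d, 0 < d /\ forall t', unit_interval t' -> Rabs (t' - t) < d -> U (g t').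

Definition meets {X : Type} (g : R -> X) (s : X -> Prop) : Prop :=
  exists t, unit_interval t /\ s (g t).

Definition finite_cover {X : Type} (S : list (X -> Prop)) : Prop :=
  NoDup S /\ forall x : X, exists s, In s S /\ s x.

(** Real power x^p for x >= 0, with 0^p = 0 (p >= 1). *)
Definition rpow (x p : R) : R := if Rle_dec x 0 then 0 else Rpower x p.

(** Infimum of a set of reals (classical choice; meaningful when it exists). *)
Definition is_glb (E : R -> Prop) (m : R) : Prop :=
  (forall x, E x -> m <= x) /\ (forall b, (forall x, E x -> b <= x) -> b <= m).
Definition Rinf (E : R -> Prop) : R := epsilon (inhabits 0) (is_glb E).

Section Modulus.
Context {X : TopSpace} (S : list (X -> Prop)).

Definition sumS (f : (X -> Prop) -> R) : R := fold_right (fun s acc => f s + acc) 0 S.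

Definition Vp (p : R) (rho : (X -> Prop) -> R) : R := sumS (fun s => rpow (rho s) p).

(** rho in M_p(S): rho >= 0 on S and 0 < V_p(rho) < oo (finite sum). *)
Definition in_Mp (p : R) (rho : (X -> Prop) -> R) : Prop :=
  (forall s, In s S -> 0 <= rho s) /\ 0 < Vp p rho.

Definition ell (rho : (X -> Prop) -> R) (g : R -> X) : R :=
  sumS (fun s => if excluded_middle_informative (meets g s) then rho s else 0).

Definition Lrho (rho : (X -> Prop) -> R) (Gam : (R -> X) -> Prop) : R :=
  Rinf (fun l => exists g, Gam g /\ l = ell rho g).

(** mod_p(Gamma,S) = inf_{rho in M_p} V_p(rho)/L_rho^p.  Conventions:
    if Gamma is empty, L_rho = +oo and every ratio is 0, so mod_p = 0;
    ratios with L_rho = 0 equal +oo and do not contribute to the infimum. *)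
Definition modp (p : R) (Gam : (R -> X) -> Prop) : R :=
  if excluded_middle_informative (exists g, Gam g) then
    Rinf (fun r => exists rho, in_Mp p rho /\ 0 < Lrho rho Gam /\
                              r = Vp p rho / Rpower (Lrho rho Gam) p)
  else 0.

Definition subfam (Gam : (R -> X) -> Prop) (s : X -> Prop) : (R -> X) -> Prop :=
  fun g => Gam g /\ meets g s.

(** sup over the (finite) s in S of f s; all values used here are >= 0,
    so taking the max together with 0 is the supremum (0 if S is empty). *)
Definition supS (f : (X -> Prop) -> R) : R := fold_right (fun s acc => Rmax (f s) acc) 0 S.

End Modulus.

From Stdlib Require Import Reals List Lra Classical ClassicalEpsilon.
Open Scope R_scope.

(* Take sigma admissible for Gamma with V_p(sigma) close to mod_p(Gamma).  On
   the elements where sigma <= eps keep sigma; each element t where sigma > eps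
   is replaced by a near-optimal q-admissible metric tau_t for Gamma(t), and
   rho is the pointwise maximum of all these.  A curve meeting some such t is
   long for tau_t, any other curve is long for sigma, so rho is admissible.
   Where sigma <= eps we have sigma^q <= eps^(q-p) sigma^p, and the number of
   elements with sigma > eps is at most eps^(-p) V_p(sigma); together
   V_q(rho) <= (eps^(q-p) + eps^(-p) sup_t mod_q(Gamma(t))) V_p(sigma). *)

Section ListSum.
Context {A : Type}.

Definition sumL (l : list A) (f : A -> R) : R :=
  fold_right (fun s acc => f s + acc) 0 l.

Definition maxL (l : list A) (f : A -> R) (b : R) : R :=
  fold_right (fun s acc => Rmax (f s) acc) b l.

Lemma sumL_le l f g : (forall x, In x l -> f x <= g x) -> sumL l f <= sumL l g.
Proof.
induction l as [|a l IH]; simpl; intros H; [lra|].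
assert (f a <= g a) by auto. assert (sumL l f <= sumL l g) by auto. lra.
Qed.

Lemma sumL_ge0 l f : (forall x, In x l -> 0 <= f x) -> 0 <= sumL l f.
Proof.
induction l as [|a l IH]; simpl; intros H; [lra|].
assert (0 <= f a) by auto. assert (0 <= sumL l f) by auto. lra.
Qed.

Lemma sumL_ext l f g : (forall x, In x l -> f x = g x) -> sumL l f = sumL l g.
Proof. induction l as [|a l IH]; simpl; intros H; auto. rewrite (H a), IH; auto. Qed.

Lemma sumL_0 l : sumL l (fun _ => 0) = 0.
Proof. induction l as [|a l IH]; simpl; [|rewrite IH]; ring. Qed.

Lemma sumL_mull l f c : sumL l (fun x => c * f x) = c * sumL l f.
Proof. induction l as [|a l IH]; simpl; [|rewrite IH]; ring. Qed.

Lemma sumL_add l f g : sumL l (fun x => f x + g x) = sumL l f + sumL l g.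
Proof. induction l as [|a l IH]; simpl; [|rewrite IH]; ring. Qed.

Lemma sumL_ge_term l f y :
  (forall x, In x l -> 0 <= f x) -> In y l -> f y <= sumL l f.
Proof.
induction l as [|a l IH]; simpl; intros H Hy; [contradiction|].
destruct Hy as [<-|Hy].
- assert (0 <= sumL l f) by (apply sumL_ge0; auto). lra.
- assert (0 <= f a) by auto. assert (f y <= sumL l f) by auto. lra.
Qed.

Lemma maxL_ge_base l f b : b <= maxL l f b.
Proof. induction l as [|a l IH]; simpl; [lra|]. eapply Rle_trans; [exact IH|apply Rmax_r]. Qed.

Lemma maxL_ge l f b y : In y l -> f y <= maxL l f b.
Proof.
induction l as [|a l IH]; simpl; intros Hy; [contradiction|].
destruct Hy as [<-|Hy]; [apply Rmax_l|].
eapply Rle_trans; [apply IH; auto|apply Rmax_r].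
Qed.

End ListSum.

Lemma sumL_swap {A B : Type} (l1 : list A) (l2 : list B) (h : A -> B -> R) :
  sumL l1 (fun x => sumL l2 (h x)) = sumL l2 (fun y => sumL l1 (fun x => h x y)).
Proof.
induction l1 as [|a l1 IH]; simpl; [now rewrite sumL_0|].
rewrite IH, <- sumL_add. reflexivity.
Qed.

Lemma Rle_of_le_plus_linear x y K :
  (forall d, 0 < d <= 1 -> x <= y + d * K) -> x <= y.
Proof.
intros H. apply Rle_plus_epsilon. intros e He.
pose proof (Rabs_pos K) as HK.
set (d := Rmin 1 (e / (Rabs K + 1))).
assert (Hd1 : d <= 1) by apply Rmin_l.
assert (Hde : d <= e / (Rabs K + 1)) by apply Rmin_r.
assert (Hd0 : 0 < d).
{ apply Rmin_glb_lt; [lra|apply Rdiv_lt_0_compat; lra]. }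
assert (d * K <= d * Rabs K) by (apply Rmult_le_compat_l; [lra|apply Rle_abs]).
assert (d * (Rabs K + 1) <= e).
{ apply (Rmult_le_compat_r (Rabs K + 1)) in Hde; [|lra].
  unfold Rdiv in Hde. rewrite Rmult_assoc, Rinv_l in Hde; lra. }
specialize (H d (conj Hd0 Hd1)). nra.
Qed.

Lemma Rinf_is_glb (E : R -> Prop) :
  (exists x, E x) -> (exists m, forall x, E x -> m <= x) -> is_glb E (Rinf E).
Proof.
intros [x Hx] [m Hm]. unfold Rinf. apply epsilon_spec.
destruct (completeness (fun y => E (- y))) as [u [Hub Hleast]].
- exists (- m). intros y Hy. specialize (Hm _ Hy). lra.
- exists (- x). now rewrite Ropp_involutive.
- exists (- u). split.
  + intros z Hz. assert (- z <= u) by (apply Hub; now rewrite Ropp_involutive). lra.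
  + intros b Hb. assert (u <= - b) by (apply Hleast; intros y Hy; specialize (Hb _ Hy); lra).
    lra.
Qed.

Lemma Rpower_gt0 x y : 0 < Rpower x y.
Proof. apply exp_pos. Qed.

Lemma Rpower_1_l y : Rpower 1 y = 1.
Proof. unfold Rpower. rewrite ln_1, Rmult_0_r. apply exp_0. Qed.

Lemma Rdiv_ge0 a b : 0 <= a -> 0 < b -> 0 <= a / b.
Proof. intros. apply Rmult_le_pos; [|apply Rlt_le, Rinv_0_lt_compat]; auto. Qed.

Lemma rpow_0_l p : rpow 0 p = 0.
Proof. unfold rpow. destruct (Rle_dec 0 0); lra. Qed.

Lemma rpow_Rpower x p : 0 < x -> rpow x p = Rpower x p.
Proof. intros. unfold rpow. destruct (Rle_dec x 0); [lra|auto]. Qed.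

Lemma rpow_ge0 x p : 0 <= rpow x p.
Proof. unfold rpow. destruct (Rle_dec x 0); [lra|apply Rlt_le, Rpower_gt0]. Qed.

Lemma rpow_Rmax_le a b q : rpow (Rmax a b) q <= rpow a q + rpow b q.
Proof.
pose proof (rpow_ge0 a q); pose proof (rpow_ge0 b q).
unfold Rmax; destruct (Rle_dec a b); lra.
Qed.

Lemma rpow_maxL_le {A} (l : list A) f b q :
  rpow (maxL l f b) q <= rpow b q + sumL l (fun t => rpow (f t) q).
Proof.
induction l as [|a l IH]; simpl; [lra|].
eapply Rle_trans; [apply rpow_Rmax_le|]. lra.
Qed.

Lemma rpow_div x L p : 0 < L -> 0 <= x -> rpow (x / L) p = rpow x p / Rpower L p.
Proof.
intros HL [Hx| <-].
- rewrite !rpow_Rpower; [|lra|apply Rdiv_lt_0_compat; lra].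
  unfold Rdiv. rewrite <- Rpower_mult_distr by (auto; apply Rinv_0_lt_compat; lra).
  f_equal. rewrite <- Rpower_Ropp. unfold Rpower. rewrite ln_Rinv by lra.
  f_equal. ring.
- unfold Rdiv. rewrite Rmult_0_l, rpow_0_l. ring.
Qed.

Lemma rpow_le_interpolate x e p q : 0 <= p <= q -> 0 <= x <= e -> 0 < e ->
  rpow x q <= Rpower e (q - p) * rpow x p.
Proof.
intros Hp [[Hx| <-] Hxe] He.
- rewrite !rpow_Rpower by lra. replace q with ((q - p) + p) at 1 by ring.
  rewrite Rpower_plus. apply Rmult_le_compat_r; [apply Rlt_le, Rpower_gt0|].
  apply Rle_Rpower_l; lra.
- rewrite !rpow_0_l. lra.
Qed.

Lemma Rpower_le_rpow e x p : 0 <= p -> 0 < e < x -> Rpower e p <= rpow x p.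
Proof. intros. rewrite rpow_Rpower by lra. apply Rle_Rpower_l; lra. Qed.

Section Modulus.
Context {X : TopSpace} (S : list (X -> Prop)).
Implicit Types (rho sigma : (X -> Prop) -> R) (Gam : (R -> X) -> Prop) (g : R -> X).

Definition nonneg_on rho : Prop := forall s, In s S -> 0 <= rho s.

Definition admissible Gam rho : Prop :=
  nonneg_on rho /\ forall g, Gam g -> 1 <= ell S rho g.

Definition modp_ratios p Gam (r : R) : Prop :=
  exists rho, in_Mp S p rho /\ 0 < Lrho S rho Gam /\
              r = Vp S p rho / Rpower (Lrho S rho Gam) p.

Lemma ell_sumL rho g : ell S rho g =
  sumL S (fun s => if excluded_middle_informative (meets g s) then rho s else 0).
Proof. reflexivity. Qed.

Lemma Vp_sumL p rho : Vp S p rho = sumL S (fun s => rpow (rho s) p).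
Proof. reflexivity. Qed.

Lemma ell_le_compat rho rho' g :
  (forall s, In s S -> rho s <= rho' s) -> ell S rho g <= ell S rho' g.
Proof.
intros H. apply (sumL_le S). intros s Hs.
destruct excluded_middle_informative; auto; lra.
Qed.

Lemma ell_ge0 rho g : nonneg_on rho -> 0 <= ell S rho g.
Proof.
intros H. apply (sumL_ge0 S). intros s Hs.
destruct excluded_middle_informative; auto; lra.
Qed.

Lemma ell_div rho g L : ell S (fun s => rho s / L) g = ell S rho g / L.
Proof.
unfold Rdiv. rewrite Rmult_comm, !ell_sumL.
rewrite <- sumL_mull. apply sumL_ext. intros s _.
destruct excluded_middle_informative; ring.
Qed.

Lemma ell_gt0_exists rho g : 0 < ell S rho g -> exists s, In s S /\ 0 < rho s.
Proof.
intros H. apply NNPP; intros Hn.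
enough (ell S rho g <= 0) by lra.
rewrite <- (sumL_0 S). apply (sumL_le S). intros s Hs.
destruct excluded_middle_informative; [|lra].
apply Rnot_lt_le. intros Hc. apply Hn. eauto.
Qed.

Lemma Vp_ge0 p rho : 0 <= Vp S p rho.
Proof. apply (sumL_ge0 S). intros; apply rpow_ge0. Qed.

Lemma Vp_gt0 p Gam rho : 0 < p -> (exists g, Gam g) -> admissible Gam rho ->
  0 < Vp S p rho.
Proof.
intros Hp [g Hg] [Hn Hell].
destruct (ell_gt0_exists rho g) as [s [Hs Hs']]; [specialize (Hell g Hg); lra|].
eapply Rlt_le_trans; [|apply (sumL_ge_term S (fun s => rpow (rho s) p) s)]; auto.
- rewrite rpow_Rpower by auto. apply Rpower_gt0.
- intros; apply rpow_ge0.
Qed.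

Section FixedGamma.
Variable Gam : (R -> X) -> Prop.

Let ells rho (l : R) : Prop := exists g, Gam g /\ l = ell S rho g.

Lemma Lrho_is_glb rho : nonneg_on rho -> (exists g, Gam g) ->
  is_glb (ells rho) (Lrho S rho Gam).
Proof.
intros Hn [g Hg]. apply Rinf_is_glb; [exists (ell S rho g); exists g; auto|].
exists 0. intros x [g' [_ ->]]. now apply ell_ge0.
Qed.

Lemma Lrho_le_ell rho g : nonneg_on rho -> Gam g -> Lrho S rho Gam <= ell S rho g.
Proof. intros Hn Hg. apply (Lrho_is_glb rho Hn (ex_intro _ g Hg)). exists g; auto. Qed.

Lemma Lrho_ge1 rho : (exists g, Gam g) -> admissible Gam rho -> 1 <= Lrho S rho Gam.
Proof.
intros Hne [Hn Hell]. apply (Lrho_is_glb rho Hn Hne). intros x [g [Hg ->]]. auto.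
Qed.

Lemma modp_empty p : ~ (exists g, Gam g) -> modp S p Gam = 0.
Proof. intros Hne. unfold modp. destruct excluded_middle_informative; tauto. Qed.

Lemma modp_is_glb p : (exists g, Gam g) -> (exists r, modp_ratios p Gam r) ->
  is_glb (modp_ratios p Gam) (modp S p Gam).
Proof.
intros Hne Hr. unfold modp. destruct excluded_middle_informative; [|contradiction].
apply Rinf_is_glb; auto. exists 0. intros x [rho [_ [_ ->]]].
apply Rdiv_ge0; [apply Vp_ge0|apply Rpower_gt0].
Qed.

Lemma admissible_ratio p rho : 0 < p -> (exists g, Gam g) -> admissible Gam rho ->
  exists r, modp_ratios p Gam r /\ r <= Vp S p rho.
Proof.
intros Hp Hne Hadm.
pose proof (Lrho_ge1 rho Hne Hadm) as HL.
pose proof (Vp_gt0 p Gam rho Hp Hne Hadm) as HV.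
assert (HP : 1 <= Rpower (Lrho S rho Gam) p).
{ rewrite <- (Rpower_1_l p). apply Rle_Rpower_l; lra. }
exists (Vp S p rho / Rpower (Lrho S rho Gam) p). split.
- exists rho. repeat split; try lra. apply Hadm.
- apply (Rmult_le_reg_r (Rpower (Lrho S rho Gam) p)); [lra|].
  unfold Rdiv. rewrite Rmult_assoc, Rinv_l by lra. nra.
Qed.

Lemma modp_le_Vp p rho : 0 < p -> (exists g, Gam g) -> admissible Gam rho ->
  modp S p Gam <= Vp S p rho.
Proof.
intros Hp Hne Hadm.
destruct (admissible_ratio p rho Hp Hne Hadm) as [r [Hr Hle]].
destruct (modp_is_glb p Hne (ex_intro _ r Hr)) as [Hlow _].
specialize (Hlow r Hr). lra.
Qed.

Lemma admissible_one : finite_cover S -> admissible Gam (fun _ => 1).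
Proof.
intros [_ Hcov]. split; [intros s _; lra|]. intros g Hg.
destruct (Hcov (g 0)) as [s [Hs Hgs]].
eapply Rle_trans;
  [|apply (sumL_ge_term S (fun s' => if excluded_middle_informative (meets g s')
                                     then 1 else 0) s)]; auto.
- destruct excluded_middle_informative as [|Hno]; [lra|].
  exfalso. apply Hno. exists 0. split; auto. unfold unit_interval; lra.
- intros; destruct excluded_middle_informative; lra.
Qed.

(* For empty Gam, where mod_p = 0, the zero metric is vacuously admissible. *)
Lemma modp_approx p d : finite_cover S -> 0 < p -> 0 < d ->
  exists sigma, admissible Gam sigma /\ Vp S p sigma <= modp S p Gam + d.
Proof.
intros Hcov Hp Hd. destruct (classic (exists g, Gam g)) as [Hne|Hne].
2:{ exists (fun _ => 0). split; [split; [intros s _; lra|intros g Hg; exfalso; eauto]|].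
    rewrite modp_empty, Vp_sumL by auto.
    rewrite (sumL_ext S _ (fun _ => 0)) by (intros; apply rpow_0_l).
    rewrite sumL_0. lra. }
destruct (admissible_ratio p _ Hp Hne (admissible_one Hcov)) as [r0 [Hr0 _]].
destruct (modp_is_glb p Hne (ex_intro _ r0 Hr0)) as [_ Hgreatest].
assert (Hex : exists r, modp_ratios p Gam r /\ r < modp S p Gam + d).
{ apply NNPP; intros Hn.
  enough (modp S p Gam + d <= modp S p Gam) by lra.
  apply Hgreatest. intros x Hx. apply Rnot_lt_le. intros Hlt. eauto. }
destruct Hex as [r [[rho [[Hn HV] [HL ->]]] Hr]].
set (L := Lrho S rho Gam) in *.
exists (fun s => rho s / L). split; [split|].
- intros s Hs. apply Rdiv_ge0; auto.
- intros g Hg. rewrite ell_div.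
  pose proof (Lrho_le_ell rho g Hn Hg) as Hle. fold L in Hle.
  apply (Rmult_le_reg_r L); auto.
  unfold Rdiv. rewrite Rmult_assoc, Rinv_l by lra. lra.
- rewrite Vp_sumL.
  rewrite (sumL_ext S _ (fun s => / Rpower L p * rpow (rho s) p)).
  2:{ intros s Hs. rewrite rpow_div by auto. unfold Rdiv. apply Rmult_comm. }
  rewrite sumL_mull. rewrite Vp_sumL in Hr. unfold Rdiv in Hr. lra.
Qed.

End FixedGamma.

Section Glue.
Variables (eps : R) (sigma : (X -> Prop) -> R) (tau : (X -> Prop) -> (X -> Prop) -> R).

Definition small_part (s : X -> Prop) : R :=
  if Rle_dec (sigma s) eps then sigma s else 0.

Definition large_part (t s : X -> Prop) : R :=
  if Rle_dec (sigma t) eps then 0 else tau t s.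

Definition glue (s : X -> Prop) : R := maxL S (fun t => large_part t s) (small_part s).

Lemma glue_admissible Gam :
  admissible Gam sigma -> (forall t, admissible (subfam Gam t) (tau t)) ->
  admissible Gam glue.
Proof.
intros [Hn Hell] Htau.
assert (Hsmall : nonneg_on small_part).
{ intros s Hs. unfold small_part. destruct Rle_dec; [apply Hn; auto|lra]. }
split.
- intros s Hs. apply Rle_trans with (small_part s); [auto|apply maxL_ge_base].
- intros g Hg.
  destruct (classic (exists t, In t S /\ ~ sigma t <= eps /\ meets g t))
    as [[t [Ht [Hbig Hm]]]|Hno].
  + eapply Rle_trans; [apply (proj2 (Htau t) g); split; auto|].
    apply ell_le_compat. intros s Hs.
    replace (tau t s) with (large_part t s)
      by (unfold large_part; destruct Rle_dec; [contradiction|auto]).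
    apply (maxL_ge S (fun t => large_part t s)); auto.
  + eapply Rle_trans; [apply (Hell g Hg)|].
    apply Rle_trans with (ell S small_part g).
    * right. apply sumL_ext. intros s Hs.
      destruct excluded_middle_informative; auto.
      unfold small_part; destruct Rle_dec; auto.
      exfalso; apply Hno; eauto.
    * apply ell_le_compat. intros s Hs. apply maxL_ge_base.
Qed.

Lemma Vp_glue_le p q M : 0 <= p <= q -> 0 < eps -> 0 <= M -> nonneg_on sigma ->
  (forall t, In t S -> Vp S q (tau t) <= M) ->
  Vp S q glue <= (Rpower eps (q - p) + / Rpower eps p * M) * Vp S p sigma.
Proof.
intros Hpq Heps HM Hn Htau.
set (A := Rpower eps (q - p)). set (B := / Rpower eps p).
assert (HA : 0 < A) by apply Rpower_gt0.
assert (HB : 0 < B) by apply Rinv_0_lt_compat, Rpower_gt0.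
assert (Hsmall : sumL S (fun s => rpow (small_part s) q) <= A * Vp S p sigma).
{ rewrite Vp_sumL, <- sumL_mull. apply sumL_le.
  intros s Hs. unfold small_part; destruct Rle_dec.
  - apply rpow_le_interpolate; auto.
  - rewrite rpow_0_l. apply Rmult_le_pos; [lra|apply rpow_ge0]. }
assert (Hlarge : sumL S (fun t => sumL S (fun s => rpow (large_part t s) q))
                 <= B * M * Vp S p sigma).
{ rewrite Vp_sumL, <- sumL_mull. apply sumL_le.
  intros t Ht. unfold large_part; destruct Rle_dec.
  - rewrite (sumL_ext S _ (fun _ => 0)) by (intros; apply rpow_0_l). rewrite sumL_0.
    apply Rmult_le_pos; [apply Rmult_le_pos; lra|apply rpow_ge0].
  - assert (HBr : 1 <= B * rpow (sigma t) p).
    { apply (Rmult_le_reg_l (Rpower eps p)); [apply Rpower_gt0|].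
      unfold B. rewrite <- Rmult_assoc, Rinv_r, Rmult_1_l, Rmult_1_r
        by apply Rgt_not_eq, Rpower_gt0.
      apply Rpower_le_rpow; lra. }
    specialize (Htau t Ht). rewrite Vp_sumL in Htau. nra. }
rewrite Vp_sumL. eapply Rle_trans.
{ apply (sumL_le _ _ (fun s => rpow (small_part s) q +
                                sumL S (fun t => rpow (large_part t s) q))).
  intros s _. apply (rpow_maxL_le S (fun t => large_part t s)). }
rewrite sumL_add, <- (sumL_swap S S (fun t s => rpow (large_part t s) q)). nra.
Qed.

End Glue.

Lemma modq_le_of_admissible p q eps d Gam sigma :
  finite_cover S -> 0 < p <= q -> 0 < eps -> 0 < d ->
  (exists g, Gam g) -> admissible Gam sigma ->
  modp S q Gam <= (Rpower eps (q - p) + / Rpower eps p *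
      (supS S (fun s => modp S q (subfam Gam s)) + d)) * Vp S p sigma.
Proof.
intros Hcov Hpq Heps Hd Hne Hadm.
set (C := supS S (fun s => modp S q (subfam Gam s))).
assert (HC : 0 <= C) by apply (maxL_ge_base S).
destruct (choice (fun t tau => admissible (subfam Gam t) tau /\
                    Vp S q tau <= modp S q (subfam Gam t) + d)) as [tau Htau].
{ intro t. apply modp_approx; auto; lra. }
eapply Rle_trans.
- apply (modp_le_Vp Gam q (glue eps sigma tau)); [lra|auto|].
  apply glue_admissible; auto. intro t. apply Htau.
- apply Vp_glue_le; try lra; [apply Hadm|]. intros t Ht.
  eapply Rle_trans; [apply Htau|].
  assert (modp S q (subfam Gam t) <= C)
    by apply (maxL_ge S (fun s => modp S q (subfam Gam s)) 0 t Ht).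
  lra.
Qed.

End Modulus.

Theorem proposition4p9 (X : TopSpace) (S : list (X -> Prop))
  (Gam : (R -> X) -> Prop) (p q : R) :
  finite_cover S ->
  (forall g, Gam g -> is_curve X g) ->
  1 <= p -> p <= q ->
  forall eps : R, 0 < eps ->
  modp S q Gam <=
    (Rpower eps (q - p) + / Rpower eps p * supS S (fun s => modp S q (subfam Gam s)))
    * modp S p Gam.
Proof.
intros Hcov _ Hp Hpq eps Heps.
destruct (classic (exists g, Gam g)) as [Hne|Hne].
2:{ rewrite !modp_empty by auto. lra. }
set (A := Rpower eps (q - p)). set (B := / Rpower eps p).
set (C := supS S (fun s => modp S q (subfam Gam s))).
set (m := modp S p Gam).
assert (HA : 0 < A) by apply Rpower_gt0.
assert (HB : 0 < B) by apply Rinv_0_lt_compat, Rpower_gt0.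
apply (Rle_of_le_plus_linear _ _ (A + B * C + B * m + B)). intros d [Hd0 Hd1].
destruct (modp_approx S Gam p d) as [sigma [Hadm HV]]; auto; try lra.
fold m in HV.
pose proof (modq_le_of_admissible S p q eps d Gam sigma) as Hkey.
fold A B C in Hkey.
assert (HC : 0 <= C) by apply (maxL_ge_base S).
assert (Hfac : 0 <= A + B * (C + d)) by nra.
assert (modp S q Gam <= (A + B * (C + d)) * (m + d)).
{ eapply Rle_trans; [apply Hkey; auto; lra|]. apply Rmult_le_compat_l; auto. }
assert (B * d * d <= B * d) by (rewrite Rmult_assoc; apply Rmult_le_compat_l; nra).
replace ((A + B * (C + d)) * (m + d))
  with ((A + B * C) * m + d * (A + B * C + B * m) + B * d * d) in * by ring.
lra.
Qed.
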